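(* Let $(\mathsf{E},\mathcal{F},\mu)$ be a probability space and let $P$ be a $\mu$-invariant Markov kernel on $\mathsf{E}$. Let $\Phi:\mathrm{L}^{2}(\mu)\to[0,\infty]$ satisfy, for all $f\in\mathrm{L}^{2}(\mu)$, $c>0$ and $n\in\mathbb{N}$, \[ \Phi(cf)=c^{2}\Phi(f),\qquad\Phi(P^{n}f)\le\Phi(f),\qquad\|f-\mu(f)\|_{2}^{2}\le a\,\Phi(f-\mu(f)), \] where $a:=\sup_{f\in\mathrm{L}_{0}^{2}(\mu)\setminus\{0\}}\|f\|_{2}^{2}/\Phi(f)\in(0,\infty)$. Suppose that $\beta:(0,\infty)\to[0,\infty)$ is decreasing with $\beta(s)\downarrow0$ as $s\to\infty$ and that for all $f\in\mathrm{L}_{0}^{2}(\mu)$ and all $s>0$, \[ \|f\|_{2}^{2}\le s\,\mathcal{E}(P^{*}P,f)+\beta(s)\Phi(f). \] Let $K(u):=u\beta(1/u)$ for $u>0$, $K(0):=0$, let $K^{*}(v):=\sup_{u\ge0}\{uv-K(u)\}$ for $v\ge0$, and let $F_{a}(x):=\int_{x}^{a}\frac{\mathrm{d}v}{K^{*}(v)}$ for $x\in(0,a]$. Then $F_{a}$ is continuous, convex and strictly decreasing with $F_{a}(x)\to\infty$ as $x\downarrow0$, so it has an inverse $F_{a}^{-1}:(0,\infty)\to(0,a)$, and for every $f\in\mathrm{L}_{0}^{2}(\mu)$ with $0<\Phi(f)<\infty$ and every $n\in\mathbb{N}$, \[ \|P^{n}f\|_{2}^{2}\le\Phi(f)\,F_{a}^{-1}(n).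 \]
   Context: $\mathrm{L}^{2}(\mu)$ is the real Hilbert space of square-integrable functions with inner product $\langle f,g\rangle=\int fg\,\mathrm{d}\mu$ and norm $\|\cdot\|_{2}$; $\mathrm{L}_{0}^{2}(\mu)=\{f\in\mathrm{L}^{2}(\mu):\mu(f)=0\}$. $P$ acts on functions by $Pf(x)=\int P(x,\mathrm{d}y)f(y)$, and $P^{*}$ is its adjoint in $\mathrm{L}^{2}(\mu)$. For a bounded operator $T$ on $\mathrm{L}^{2}(\mu)$, the Dirichlet form is $\mathcal{E}(T,f):=\langle(\mathrm{Id}-T)f,f\rangle$. $\mathbb{N}=\{1,2,\dots\}$. *)

From HB Require Import structures.
From mathcomp Require Import all_boot all_order all_algebra.
From mathcomp Require Import all_classical all_reals all_analysis.
Set Implicit Arguments. Unset Strict Implicit. Unset Printing Implicit Defensive.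
Import Order.TTheory GRing.Theory Num.Theory.
Import numFieldNormedType.Exports.
Local Open Scope classical_set_scope.
Local Open Scope ring_scope.

Section L2defs.
Context {d : measure_display} {T : measurableType d} {R : realType}.

Definition L2 (mu : {measure set T -> \bar R}) (f : T -> R) : Prop :=
  measurable_fun [set: T] f /\ (\int[mu]_x ((f x) ^+ 2)%:E < +oo)%E.

Definition mean (mu : {measure set T -> \bar R}) (f : T -> R) : R :=
  fine (\int[mu]_x (f x)%:E).

Definition L20 (mu : {measure set T -> \bar R}) (f : T -> R) : Prop :=
  L2 mu f /\ mean mu f = 0.

Definition ip (mu : {measure set T -> \bar R}) (f g : T -> R) : R :=
  fine (\int[mu]_x (f x * g x)%:E).

Definition norm2 (mu : {measure set T -> \bar R}) (f : T -> R) : R :=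
  fine (\int[mu]_x ((f x) ^+ 2)%:E).

Definition dirichlet (mu : {measure set T -> \bar R})
  (Top : (T -> R) -> (T -> R)) (f : T -> R) : R :=
  ip mu (fun x => f x - Top f x) f.

Definition kop (P : R.-pker T ~> T) (f : T -> R) : T -> R :=
  fun x => fine (\int[P x]_y (f y)%:E).

Definition kinvariant (mu : {measure set T -> \bar R}) (P : R.-pker T ~> T) :=
  forall A, measurable A -> (\int[mu]_x P x A = mu A)%E.

End L2defs.

Section Fdefs.
Context {R : realType}.

Definition Kfun (beta : R -> R) (u : R) : R :=
  if 0 < u then u * beta (1 / u) else 0.

Definition Kstar (beta : R -> R) (v : R) : \bar R :=
  ereal_sup [set ((u * v - Kfun beta u)%:E) | u in [set u : R | 0 <= u]].

(* F_a(x) = \int_x^a dv / K^*(v)  (with 1/(+oo) = 0) *)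
Definition Fa (beta : R -> R) (a x : R) : \bar R :=
  (\int[lebesgue_measure]_(v in `[x, a]) (Kstar beta v)^-1)%E.

End Fdefs.

(* Write [x_k := ||P^k f||^2 / Phi(f)].  Since [E(P^*P, g) = ||g||^2 - ||P g||^2]
   and [Phi(P^k f) <= Phi(f)], the hypothesis applied to [P^k f] with [s = 1/u],
   optimised over [u], gives [K^*(x_k) <= x_k - x_(k+1)]: the sequence decreases
   at least as fast as the solution of [x' = -K^*(x)].  Now [F_a' = -1/K^*] with
   [1/K^*] nonincreasing, so each step raises [F_a(x_k)] by at least
   [(x_k - x_(k+1)) / K^*(x_k) >= 1]; as [x_0 <= a] by definition of [a], we get
   [F_a(x_n) >= n], i.e. [x_n <= F_a^-1(n)].  The properties of [F_a] all follow
   from bracketing [F_a(x) - F_a(y)] between [(y - x)/K^*(y)] and [(y - x)/K^*(x)],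
   with [K^*] finite below [a] (again by definition of [a]) and [K^*(v) = O(v)]
   near [0]. *)

From HB Require Import structures.
From mathcomp Require Import all_boot all_order all_algebra.
From mathcomp Require Import all_classical all_reals all_analysis.
From mathcomp Require Import measurable_realfun.
From mathcomp Require Import ring lra.
Import Order.TTheory GRing.Theory Num.Theory.
Import numFieldNormedType.Exports.
Local Open Scope classical_set_scope.
Local Open Scope ring_scope.
Set Implicit Arguments. Unset Strict Implicit. Unset Printing Implicit Defensive.

Section L2_facts.
Context d (T : measurableType d) (R : realType).
Implicit Types (m : {measure set T -> \bar R}) (f g : T -> R).

Lemma L2_Lfun2 m f : L2 m f -> f \in Lfun m 2%:E.
Proof.
move=> [mf fi]; rewrite inE; apply/andP; split; first by rewrite inE.
rewrite inE /= /finite_norm unlock; apply: poweR_lty; apply: le_lt_trans fi.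
rewrite (eq_integral (fun x => ((f x) ^+ 2)%:E))// => x _.
by rewrite /= powR_mulrn// real_normK// num_real.
Qed.

Lemma L2_cst m c : m setT \is a fin_num -> L2 m (cst c).
Proof.
move=> mfin; split => //.
rewrite (_ : (fun x => _) = cst (c ^+ 2)%:E)// integral_cst//.
by rewrite -ge0_fin_numE ?fin_numM// mule_ge0 ?lee_fin ?sqr_ge0.
Qed.

Lemma L2_integrable_sqr m f : L2 m f ->
  m.-integrable setT (EFin \o (fun x => f x ^+ 2)).
Proof. by move/L2_Lfun2/Lfun2_integrable_sqr. Qed.

Lemma L2_integrable m f : m setT \is a fin_num -> L2 m f ->
  m.-integrable setT (EFin \o f).
Proof. by move=> mfin /L2_Lfun2/(Lfun_subset12 mfin)/Lfun1_integrable. Qed.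

Lemma L2_integrable_mul m f g : L2 m f -> L2 m g ->
  m.-integrable setT (EFin \o (fun x => f x * g x)).
Proof. by move=> /L2_Lfun2 f2 /L2_Lfun2 g2; exact/Lfun1_integrable/Lfun2_mul_Lfun1. Qed.

Lemma norm2_ge0 m f : 0 <= norm2 m f.
Proof. by apply/fine_ge0/integral_ge0 => x _; rewrite lee_fin sqr_ge0. Qed.

Lemma sqr_mean_le m f : m setT = 1%E -> L2 m f -> mean m f ^+ 2 <= norm2 m f.
Proof.
move=> m1 hf; have mfin : m setT \is a fin_num by rewrite m1.
set c := mean m f.
have i1 := L2_integrable mfin hf.
have ic := L2_integrable mfin (L2_cst (c ^+ 2) mfin).
have iZ : m.-integrable setT (EFin \o (fun x => 2 * c * f x)).
  by apply: eq_integrable (integrableZl measurableT (2 * c) i1) => //= x _; rewrite EFinM.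
have iaff : m.-integrable setT (EFin \o (fun x => 2 * c * f x - c ^+ 2)).
  by apply: eq_integrable (integrableB measurableT iZ ic) => //= x _; rewrite EFinB.
have key : Rintegral m setT (fun x => 2 * c * f x - c ^+ 2) <=
    Rintegral m setT (fun x => f x ^+ 2).
  apply: (le_Rintegral measurableT iaff (L2_integrable_sqr hf)) => x _.
  by have := sqr_ge0 (f x - c); nra.
rewrite RintegralB// RintegralZl// Rintegral_cst// m1 /= mulr1 in key.
have Ec : Rintegral m setT (fun x => f x) = c by [].
by move: key; rewrite Ec (_ : 2 * c * c - c ^+ 2 = c ^+ 2)//; ring.
Qed.

End L2_facts.

Section markov_operator.
Context d (T : measurableType d) (R : realType) (mu : probability T R)
  (P : R.-pker T ~> T).
Local Open Scope ereal_scope.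

Lemma measurable_kernel_integral (h : T -> \bar R) :
  (forall y, 0 <= h y) -> measurable_fun setT h ->
  measurable_fun setT (fun x => \int[P x]_y h y).
Proof.
move=> h0 mh; apply: measurable_fun_integral_kernel => //.
by move=> U mU; exact: measurable_kernel.
Qed.

Lemma measurable_kop (f : T -> R) : measurable_fun setT f ->
  measurable_fun setT (kop P f).
Proof.
move=> /measurable_EFinP mf.
rewrite (_ : kop P f = fine \o ((fun x => \int[P x]_y (EFin \o f)^\+ y) \-
                                (fun x => \int[P x]_y (EFin \o f)^\- y))).
  apply: measurableT_comp; first exact: (fine_measurable measurableT).
  by apply: emeasurable_funB; apply: measurable_kernel_integral;
    [exact: funepos_ge0|exact: measurable_funepos|
     exact: funeneg_ge0|exact: measurable_funeneg].
by apply/funext => x; rewrite /kop /= [in LHS]integralE.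
Qed.

Lemma kop_sqr_le (f : T -> R) x : measurable_fun setT f ->
  ((kop P f x) ^+ 2)%:E <= \int[P x]_y ((f y) ^+ 2)%:E.
Proof.
move=> mf; have [->|] := eqVneq (\int[P x]_y ((f y) ^+ 2)%:E) +oo; first exact: leey.
rewrite -ltey => fi.
rewrite -[X in _ <= X]fineK ?ge0_fin_numE ?integral_ge0// => [|y _]; last first.
  by rewrite lee_fin sqr_ge0.
rewrite lee_fin; exact: sqr_mean_le (@prob_kernel _ _ _ _ _ P x) (conj mf fi).
Qed.

Hypothesis Pinv : kinvariant mu P.

(* By invariance, composing the constant kernel [mu] (indexed by [unit]) with
   [P] gives back [mu], so this is Fubini for kernel composition. *)
Lemma integral_kinvariant (h : T -> \bar R) :
  (forall y, 0 <= h y) -> measurable_fun setT h ->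
  \int[mu]_x \int[P x]_y h y = \int[mu]_y h y.
Proof.
move=> h0 mh.
pose l := kprobability (measurable_cst (mu : pprobability T R) : measurable_fun [set: unit] _).
pose k := @kernel.kernel_snd _ _ _ unit T T R P.
rewrite -(integral_kcomp l k tt h0 mh).
by apply: eq_measure_integral => A mA _; exact: Pinv.
Qed.

Lemma integral_sqr_kop_le (f : T -> R) : measurable_fun setT f ->
  \int[mu]_x ((kop P f x) ^+ 2)%:E <= \int[mu]_x ((f x) ^+ 2)%:E.
Proof.
move=> mf; have f20 y : 0 <= ((f y) ^+ 2)%:E by rewrite lee_fin sqr_ge0.
have mf2 : measurable_fun setT (fun y => ((f y) ^+ 2)%:E).
  by apply/measurable_EFinP; exact: measurable_funX.
rewrite -(integral_kinvariant f20 mf2); apply: ge0_le_integral => //.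
- by move=> x _; rewrite lee_fin sqr_ge0.
- by apply/measurable_EFinP/measurable_funX; exact: measurable_kop.
- exact: measurable_kernel_integral.
- by move=> x _; exact: kop_sqr_le.
Qed.

Lemma kop_L2 (f : T -> R) : L2 mu f -> L2 mu (kop P f).
Proof.
move=> [mf fi]; split; first exact: measurable_kop.
exact: le_lt_trans (integral_sqr_kop_le mf) fi.
Qed.

Lemma norm2_kop_le (f : T -> R) : L2 mu f -> (norm2 mu (kop P f) <= norm2 mu f)%R.
Proof.
move=> [mf fi]; have le_sqr := integral_sqr_kop_le mf.
have fin_sqr (g : T -> R) : \int[mu]_x ((g x) ^+ 2)%:E < +oo ->
    \int[mu]_x ((g x) ^+ 2)%:E \is a fin_num.
  by move=> gi; rewrite ge0_fin_numE// integral_ge0// => x _; rewrite lee_fin sqr_ge0.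
exact: fine_le (fin_sqr _ (le_lt_trans le_sqr fi)) (fin_sqr _ fi) le_sqr.
Qed.

Lemma integrable_kernel_integral (h : T -> \bar R) :
  (forall y, 0 <= h y) -> mu.-integrable setT h ->
  mu.-integrable setT (fun x => \int[P x]_y h y).
Proof.
move=> h0 hi; have mh := measurable_int _ hi.
apply/integrableP; split; first exact: measurable_kernel_integral.
under eq_integral => x _ do rewrite gee0_abs ?integral_ge0//.
rewrite integral_kinvariant//; move/integrableP: hi => [_].
by under eq_integral => x _ do rewrite gee0_abs//.
Qed.

Lemma mean_kop (f : T -> R) : mu.-integrable setT (EFin \o f) ->
  mean mu (kop P f) = mean mu f.
Proof.
move=> fi; have mf := measurable_int _ fi.
set A := fun x => \int[P x]_y (EFin \o f)^\+ y.
set B := fun x => \int[P x]_y (EFin \o f)^\- y.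
have iA : mu.-integrable setT A.
  exact: integrable_kernel_integral (integrable_funepos measurableT fi).
have iB : mu.-integrable setT B.
  exact: integrable_kernel_integral (integrable_funeneg measurableT fi).
have kopE : ae_eq mu setT (EFin \o kop P f) (A \- B).
  apply: filterS2 (integrable_ae measurableT iA) (integrable_ae measurableT iB).
  move=> x Afin Bfin _; rewrite /= /kop integralE fineK//.
  by rewrite fin_numB Afin// Bfin.
rewrite /mean (ae_eq_integral (A \- B))//; last 2 first.
- by apply/measurable_EFinP; exact/measurable_kop/measurable_EFinP.
- exact: emeasurable_funB (measurable_int _ iA) (measurable_int _ iB).
rewrite integralB// [in RHS]integralE.
by rewrite !integral_kinvariant//;
  [exact: measurable_funeneg|exact: measurable_funepos].
Qed.

Lemma L20_iter_kop (f : T -> R) k : L20 mu f -> L20 mu (iter k (kop P) f).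
Proof.
have mu_fin : mu setT \is a fin_num by rewrite probability_setT.
move=> hf; elim: k => //= k [hk mk]; split; first exact: kop_L2.
by rewrite mean_kop// L2_integrable.
Qed.

End markov_operator.

Section dirichlet_form.
Context d (T : measurableType d) (R : realType) (mu : probability T R)
  (P : R.-pker T ~> T) (Pstar : (T -> R) -> (T -> R)).
Hypothesis Pinv : kinvariant mu P.
Hypothesis L2_Pstar : forall g, L2 mu g -> L2 mu (Pstar g).
Hypothesis Pstar_adjoint : forall f g, L2 mu f -> L2 mu g ->
  ip mu (kop P f) g = ip mu f (Pstar g).

Lemma dirichlet_kop f : L2 mu f ->
  dirichlet mu (fun g => Pstar (kop P g)) f = norm2 mu f - norm2 mu (kop P f).
Proof.
move=> hf; have hPf := kop_L2 Pinv hf; have hPPf := L2_Pstar hPf.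
rewrite /dirichlet /ip.
change (Rintegral mu setT (fun x => (f x - Pstar (kop P f) x) * f x) =
  norm2 mu f - norm2 mu (kop P f)).
under eq_Rintegral => x _ do rewrite mulrBl -expr2 mulrC.
rewrite RintegralB//; [|exact: L2_integrable_sqr|exact: L2_integrable_mul].
by congr (_ - _); rewrite -[LHS]/(ip mu f (Pstar (kop P f))) -Pstar_adjoint.
Qed.

Lemma dirichlet_kop_ge0 f : L2 mu f -> 0 <= dirichlet mu (fun g => Pstar (kop P g)) f.
Proof. by move=> hf; rewrite dirichlet_kop// subr_ge0 norm2_kop_le. Qed.

End dirichlet_form.

Section Kstar.
Context (R : realType) (beta : R -> R).
Local Notation K := (Kstar beta).

Lemma Kfun0 : Kfun beta 0 = 0.
Proof. by rewrite /Kfun ltxx. Qed.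

Lemma Kfun_gt0 u : 0 < u -> Kfun beta u = u * beta (1 / u).
Proof. by rewrite /Kfun => ->. Qed.

Lemma Kstar_ge u v : 0 <= u -> ((u * v - Kfun beta u)%:E <= K v)%E.
Proof. by move=> u0; apply: ereal_sup_ubound; exists u. Qed.

Lemma Kstar_ge0 v : (0 <= K v)%E.
Proof. by have := Kstar_ge v (lexx 0); rewrite Kfun0 mul0r subrr. Qed.

Lemma Kstar_le v w : v <= w -> (K v <= K w)%E.
Proof.
move=> vw; apply: ge_ereal_sup => _ [u /= u0 <-].
by apply: le_trans (Kstar_ge w u0); rewrite lee_fin lerD2r ler_wpM2l.
Qed.

(* Taking [s = 1/u] bounds the term [u N/phi - K(u)] of the supremum. *)
Lemma Kstar_le_nash (N E phi : R) : 0 < phi -> 0 <= E ->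
  (forall s, 0 < s -> N <= s * E + beta s * phi) ->
  (K (N / phi) <= (E / phi)%:E)%E.
Proof.
move=> phi0 E0 nash; apply: ge_ereal_sup => _ [u /= u0 <-]; rewrite lee_fin.
have [->|u_gt0] := eqVneq u 0; first by rewrite Kfun0 mul0r subr0 divr_ge0// ltW.
have {u0 u_gt0}u0 : 0 < u by rewrite lt_neqAle eq_sym u_gt0.
rewrite Kfun_gt0// ler_pdivlMr//.
have := ler_wpM2l (ltW u0) (nash _ (divr_gt0 ltr01 u0)).
have -> : u * (1 / u * E + beta (1 / u) * phi) = E + u * beta (1 / u) * phi.
  by field; rewrite gt_eqF.
have -> : (u * (N / phi) - u * beta (1 / u)) * phi = u * N - u * beta (1 / u) * phi.
  by field; rewrite gt_eqF.
lra.
Qed.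

Hypothesis beta_ge0 : forall s, 0 < s -> 0 <= beta s.

(* If [beta] vanished on [(0, +oo)], then [K v] would be [sup_u u v = +oo]. *)
Lemma Kstar_fin_beta_gt0 v : 0 < v -> (K v < +oo)%E ->
  exists s, 0 < s /\ 0 < beta s.
Proof.
move=> v0 Kfin; apply: contrapT => beta_le0.
have beta0 s : 0 < s -> beta s = 0.
  move=> s0; apply/eqP; rewrite eq_le beta_ge0// andbT leNgt.
  by apply/negP => bs; apply: beta_le0; exists s.
have [M KM] : exists M, K v = M%:E.
  by exists (fine (K v)); rewrite fineK// ge0_fin_numE ?Kstar_ge0.
set u := (`|M| + 1) / v.
have u0 : 0 < u by rewrite divr_gt0// ltr_wpDl.
have := Kstar_ge v (ltW u0).
rewrite KM lee_fin Kfun_gt0// beta0 ?divr_gt0// mulr0 subr0 /u divfK ?gt_eqF//.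
by have := ler_norm M; lra.
Qed.

Hypothesis beta_noninc : forall s t, 0 < s -> s <= t -> beta t <= beta s.

Lemma Kstar_le_linear s0 v : 0 < s0 -> 0 <= v <= beta s0 ->
  (K v <= (v / s0)%:E)%E.
Proof.
move=> s00 /andP[v0 vb]; apply: ge_ereal_sup => _ [u /= u0 <-]; rewrite lee_fin.
have [->|u_gt0] := eqVneq u 0; first by rewrite Kfun0 mul0r subr0 divr_ge0// ltW.
have {u0 u_gt0}u0 : 0 < u by rewrite lt_neqAle eq_sym u_gt0.
have bu : 0 <= beta (1 / u) by rewrite beta_ge0// divr_gt0.
rewrite Kfun_gt0//; have [us|su] := leP u (1 / s0).
  have : u * v <= 1 / s0 * v by rewrite ler_wpM2r.
  have : 0 <= u * beta (1 / u) by rewrite mulr_ge0// ltW.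
  lra.
have hb : beta s0 <= beta (1 / u).
  by apply: beta_noninc; rewrite ?divr_gt0// ler_pdivrMr// mulrC -ler_pdivrMr// ltW.
have : u * v <= u * beta (1 / u) by rewrite ler_wpM2l ?(le_trans vb)// ltW.
have : 0 <= v / s0 by rewrite divr_ge0// ltW.
lra.
Qed.

Hypothesis beta_cvg0 : beta x @[x --> +oo] --> 0.

Lemma Kstar_gt0 v : 0 < v -> (0 < K v)%E.
Proof.
move=> v0; have [M [_ HM]] := (cvgrPdist_lt _ _).1 beta_cvg0 v v0.
set t := `|M| + 1.
have t0 : 0 < t by rewrite ltr_wpDl.
have bt : beta t < v.
  have Mt : M < t by rewrite /t; have := ler_norm M; lra.
  by move: (HM _ Mt); rewrite sub0r normrN; apply: le_lt_trans; exact: ler_norm.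
apply: lt_le_trans (Kstar_ge v (ltW (divr_gt0 ltr01 t0))).
by rewrite lte_fin Kfun_gt0 ?divr_gt0// -mulrBr div1r div1r invrK mulr_gt0 ?invr_gt0 ?subr_gt0.
Qed.

Definition Kinv v := fine (K v)^-1.

Lemma Kinv_ge0 v : 0 <= Kinv v.
Proof. by apply: fine_ge0; rewrite inve_ge0 Kstar_ge0. Qed.

Lemma Kstar_invE v : 0 < v -> ((K v)^-1 = (Kinv v)%:E)%E.
Proof.
rewrite /Kinv => /Kstar_gt0; case: (K v) => [r||]//= r0.
by rewrite inver gt_eqF.
Qed.

Lemma Kinv_le v w : 0 < v -> v <= w -> Kinv w <= Kinv v.
Proof.
move=> v0 vw; rewrite -lee_fin -!Kstar_invE ?(lt_le_trans v0)//.
by rewrite lee_pV2 ?inE ?Kstar_ge0 ?Kstar_le.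
Qed.

Lemma Kinv_ge v c : 0 < v -> (K v <= c%:E)%E -> c^-1 <= Kinv v.
Proof.
rewrite /Kinv => /Kstar_gt0; case: (K v) => [r||]//=; rewrite lte_fin lee_fin => r0 rc.
by rewrite inver gt_eqF//= lef_pV2 ?posrE// (lt_le_trans r0).
Qed.

Lemma Kinv_gt0 v : 0 < v -> (K v < +oo)%E -> 0 < Kinv v.
Proof.
rewrite /Kinv => /Kstar_gt0; case: (K v) => [r||]//=; rewrite lte_fin => r0 _.
by rewrite inver gt_eqF//= invr_gt0.
Qed.

End Kstar.

Section nonincreasing_integral.
Context (R : realType).
Local Notation leb := (@lebesgue_measure R).
Variables (g : R -> R) (x y : R).
Hypothesis xy : x <= y.
Hypothesis g_noninc : forall u v, x <= u -> u <= v -> v <= y -> g v <= g u.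

Lemma measurable_fun_nonincreasing (D : set R) : measurable D ->
  D `<=` [set` `[x, y]] -> measurable_fun D g.
Proof.
move=> mD Dxy; pose clamp v := Num.min (Num.max v x) y.
have clamp_itv v : x <= clamp v <= y.
  by rewrite /clamp le_min ge_min le_max lexx xy lexx !orbT.
have clamp_nd : {homo clamp : u v / u <= v}.
  by move=> u v uv; rewrite /clamp le_min !ge_min lexx ge_max !le_max uv lexx !orbT.
apply: (eq_measurable_fun (g \o clamp)); last first.
  apply: nonincreasing_measurable => // u v uv.
  have /andP[xu uy] := clamp_itv u; have /andP[xv vy] := clamp_itv v.
  exact: g_noninc xu (clamp_nd _ _ uv) vy.
move=> v; rewrite inE => /Dxy; rewrite /= in_itv /= => /andP[xv vy].
by rewrite /clamp (max_idPl xv) (min_idPl vy).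
Qed.

Lemma integral_nonincreasing_bounds (D : set R) : measurable D ->
  D `<=` [set` `[x, y]] -> 0 <= g y ->
  ((g y)%:E * leb D <= \int[leb]_(v in D) (g v)%:E <= (g x)%:E * leb D)%E.
Proof.
move=> mD Dxy gy0; have mg := measurable_fun_nonincreasing mD Dxy.
have gyv v : D v -> g y <= g v.
  by move=> /Dxy; rewrite /= in_itv /= => /andP[xv vy]; exact: g_noninc.
have gvx v : D v -> g v <= g x.
  by move=> /Dxy; rewrite /= in_itv /= => /andP[xv vy]; exact: g_noninc.
rewrite -!integral_cst//; apply/andP; split; apply: ge0_le_integral => //.
all: try exact/measurable_EFinP.
all: try by move=> v Dv; rewrite lee_fin ?gyv ?gvx// (le_trans gy0 (gyv _ Dv)).
Qed.

End nonincreasing_integral.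

Lemma lebesgue_measure_itv_bnd (R : realType) (b1 b2 : bool) (x y : R) : x <= y ->
  lebesgue_measure [set` Interval (BSide b1 x) (BSide b2 y)] = (y - x)%:E.
Proof.
move=> xy; rewrite lebesgue_measure_itv /= lte_fin.
have [xy'|yx] := ltP x y; first by rewrite EFinB.
have -> : y = x by apply/eqP; rewrite eq_le xy yx.
by rewrite subrr.
Qed.

Lemma ler_div_pow2 (R : numFieldType) n (w : R) : 0 <= w -> w / 2 ^+ n <= w.
Proof.
move=> w0; rewrite ler_pdivrMr ?exprn_gt0// ler_peMr//.
by apply: exprn_ege1; rewrite ler1n.
Qed.

Section Fa_properties.
Context (R : realType) (beta : R -> R) (a : R).
Hypothesis a_gt0 : 0 < a.
Hypothesis beta_ge0 : forall s, 0 < s -> 0 <= beta s.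
Hypothesis beta_noninc : forall s t, 0 < s -> s <= t -> beta t <= beta s.
Hypothesis beta_cvg0 : beta x @[x --> +oo] --> 0.
Hypothesis Kstar_fin : forall v, 0 < v < a -> (Kstar beta v < +oo)%E.

Local Notation leb := (@lebesgue_measure R).
Local Notation F x := (fine (Fa beta a x)).

Lemma Kinv_noninc x y : 0 < x ->
  forall u v, x <= u -> u <= v -> v <= y -> Kinv beta v <= Kinv beta u.
Proof. by move=> x0 u v xu uv _; exact: (Kinv_le beta_cvg0 (lt_le_trans x0 xu) uv). Qed.

Lemma integral_Kinv_bounds x y (D : set R) : 0 < x -> x <= y -> measurable D ->
  D `<=` [set` `[x, y]] ->
  ((Kinv beta y)%:E * leb D <= \int[leb]_(v in D) (Kinv beta v)%:E
    <= (Kinv beta x)%:E * leb D)%E.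
Proof.
move=> x0 xy mD Dxy.
exact: (integral_nonincreasing_bounds xy (Kinv_noninc (y := y) x0) mD Dxy (Kinv_ge0 _ _)).
Qed.

Lemma Fa_Kinv x : 0 < x ->
  Fa beta a x = (\int[leb]_(v in `[x, a]) (Kinv beta v)%:E)%E.
Proof.
move=> x0; apply: eq_integral => v; rewrite inE /= in_itv /= => /andP[xv _].
exact: (Kstar_invE beta_cvg0 (lt_le_trans x0 xv)).
Qed.

Lemma Fa_ge0 x : 0 <= F x.
Proof.
by apply/fine_ge0/integral_ge0 => v _; rewrite inve_ge0 Kstar_ge0.
Qed.

Lemma Fa_split x y : 0 < x -> x <= y -> y <= a ->
  Fa beta a x = (\int[leb]_(v in `[x, y[) (Kinv beta v)%:E + Fa beta a y)%E.
Proof.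
move=> x0 xy ya; rewrite !Fa_Kinv ?(lt_le_trans x0)//.
have mK : measurable_fun [set` `[x, a]] (EFin \o Kinv beta).
  apply/measurable_EFinP.
  exact: (measurable_fun_nonincreasing (le_trans xy ya) (Kinv_noninc (y := a) x0)
            (measurable_itv _)).
rewrite (@itv_bndbnd_setU _ _ _ (BLeft y)) ?bnd_simp// in mK *.
rewrite ge0_integral_setU//= => [v _|]; first by rewrite lee_fin Kinv_ge0.
apply/disj_setPS => v [] /=; rewrite !in_itv /= => /andP[_ vy] /andP[yv _].
by move: (lt_le_trans vy yv); rewrite ltxx.
Qed.

Lemma Fa_fin_num x : 0 < x -> x <= a -> Fa beta a x \is a fin_num.
Proof.
move=> x0 xa; rewrite Fa_Kinv// ge0_fin_numE ?integral_ge0// => [|v _]; last first.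
  by rewrite lee_fin Kinv_ge0.
have /andP[_ le_x] := integral_Kinv_bounds x0 xa (measurable_itv `[x, a]) (@subset_refl _ _).
by rewrite (le_lt_trans le_x)// lebesgue_measure_itv_bnd// -EFinM ltry.
Qed.

Lemma Fa_diff_bounds x y : 0 < x -> x <= y -> y <= a ->
  Kinv beta y * (y - x) <= F x - F y <= Kinv beta x * (y - x).
Proof.
move=> x0 xy ya.
have sub : [set` `[x, y[] `<=` [set` `[x, y]].
  by apply: subset_itvl; rewrite bnd_simp.
have := integral_Kinv_bounds x0 xy (measurable_itv `[x, y[) sub.
rewrite lebesgue_measure_itv_bnd// -!EFinM (Fa_split x0 xy ya).
set J := (\int[leb]_(v in _) _)%E => /andP[Jge Jle].
have Jfin : J \is a fin_num.
  rewrite ge0_fin_numE ?(le_lt_trans Jle) ?ltry// (le_trans _ Jge)//.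
  by rewrite lee_fin mulr_ge0 ?Kinv_ge0 ?subr_ge0.
rewrite fineD ?Fa_fin_num ?(lt_le_trans x0)// addrK.
by rewrite -!lee_fin fineK// Jge Jle.
Qed.

Lemma Fa_le x y : 0 < x -> x <= y -> y <= a -> F y <= F x.
Proof.
move=> x0 xy ya; have /andP[lb _] := Fa_diff_bounds x0 xy ya.
by rewrite -subr_ge0 (le_trans _ lb)// mulr_ge0 ?Kinv_ge0 ?subr_ge0.
Qed.

(* [K^*] is finite at the midpoint [m] of [x, y], so [1/K^*] is positive on [x, m]. *)
Lemma Fa_lt x y : 0 < x -> x < y -> y <= a -> F y < F x.
Proof.
move=> x0 xy ya; set m := (x + y) / 2.
have xm : x < m by rewrite /m ltr_pdivlMr//; lra.
have my : m < y by rewrite /m ltr_pdivrMr//; lra.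
have m0 : 0 < m := lt_trans x0 xm.
have /andP[lb _] := Fa_diff_bounds x0 (ltW xm) (le_trans (ltW my) ya).
have Kfin_m : (Kstar beta m < +oo)%E by apply: Kstar_fin; rewrite m0 (lt_le_trans my ya).
have Km := Kinv_gt0 beta_cvg0 m0 Kfin_m.
have := Fa_le m0 (ltW my) ya.
have : 0 < Kinv beta m * (m - x) by rewrite mulr_gt0// subr_gt0.
lra.
Qed.

(* The slope of [F] is at most [-1/K^*(z)] on [[x, z]] and at least [-1/K^*(z)]
   on [[z, y]]. *)
Lemma Fa_convex x y t : 0 < x <= a -> 0 < y <= a -> 0 <= t <= 1 ->
  F (t * x + (1 - t) * y) <= t * F x + (1 - t) * F y.
Proof.
wlog xy : x y t / x <= y => [hwlog|].
  move=> hx hy ht; have [xy|/ltW yx] := leP x y; first exact: hwlog.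
  have -> : t * x + (1 - t) * y = (1 - t) * y + (1 - (1 - t)) * x by ring.
  have -> : t * F x + (1 - t) * F y = (1 - t) * F y + (1 - (1 - t)) * F x by ring.
  by apply: hwlog => //; case/andP: ht => t0 t1; apply/andP; split; lra.
move=> /andP[x0 xa] /andP[y0 ya] /andP[t0 t1].
set z := t * x + (1 - t) * y.
have xz : x <= z by rewrite /z; nra.
have zy : z <= y by rewrite /z; nra.
have z0 : 0 < z := lt_le_trans x0 xz.
have /andP[lbxz _] := Fa_diff_bounds x0 xz (le_trans zy ya).
have /andP[_ ubzy] := Fa_diff_bounds z0 zy ya.
have g0 : 0 <= Kinv beta z := Kinv_ge0 _ _.
have e1 : z - x = (1 - t) * (y - x) by rewrite /z; ring.
have e2 : y - z = t * (y - x) by rewrite /z; ring.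
rewrite e1 in lbxz; rewrite e2 in ubzy.
have t1' : 0 <= 1 - t by rewrite subr_ge0.
have := ler_wpM2l t0 lbxz; have := ler_wpM2l t1' ubzy.
nra.
Qed.

Lemma Fa_lipschitz m x y : 0 < m -> m <= x <= a -> m <= y <= a ->
  `|F x - F y| <= Kinv beta m * `|x - y|.
Proof.
wlog xy : x y / x <= y => [hwlog m0 hx hy|].
  have [xy|/ltW yx] := leP x y; first exact: hwlog.
  by rewrite distrC (distrC x); exact: hwlog.
move=> m0 /andP[mx xa] /andP[my ya]; have x0 := lt_le_trans m0 mx.
have /andP[_ ub] := Fa_diff_bounds x0 xy ya.
rewrite ger0_norm ?subr_ge0 ?Fa_le// distrC ger0_norm ?subr_ge0//.
by apply: le_trans ub _; rewrite ler_wpM2r ?subr_ge0// Kinv_le.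
Qed.

Lemma Fa_continuous : {within `]0, a], continuous (fun x => F x)}.
Proof.
apply/subspace_continuousP => x /=; rewrite in_itv /= => /andP[x0 xa].
apply/cvgrPdist_lt => e e0; rewrite near_withinE.
set m := x / 2; have m0 : 0 < m by rewrite divr_gt0.
set L := Kinv beta m + 1; have L0 : 0 < L by rewrite ltr_wpDl ?Kinv_ge0.
exists (Num.min m (e / L)) => /=; first by rewrite lt_min m0 divr_gt0.
move=> y /=; rewrite lt_min => /andP[ym ye]; rewrite in_itv /= => /andP[y0 ya].
have xm : x = m + m by rewrite /m; field.
have mxa : m <= x <= a by rewrite xa andbT; lra.
have mya : m <= y <= a by rewrite ya andbT; have := ler_norm (x - y); lra.
apply: le_lt_trans (Fa_lipschitz m0 mxa mya) _.
apply: le_lt_trans (ler_wpM2l (Kinv_ge0 _ _) (ltW ye)) _.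
rewrite mulrCA gtr_pMr// ltr_pdivrMr// mul1r ltrDl//.
Qed.

(* Near [0], [K^*(v) <= v / s0], so halving [v] adds at least [s0 / 2] to [F]. *)
Lemma Fa_halving_ge s0 w j : 0 < s0 -> 0 < w -> w <= beta s0 -> w <= a ->
  j%:R * s0 / 2 <= F (w / 2 ^+ j).
Proof.
move=> s00 w0 wb wa; elim: j => [|j IH]; first by rewrite mul0r mul0r Fa_ge0.
set v := w / 2 ^+ j; have v0 : 0 < v by rewrite divr_gt0// exprn_gt0.
have vw : v <= w by exact: ler_div_pow2 (ltW w0).
have -> : w / 2 ^+ j.+1 = v / 2 by rewrite /v exprS invfM mulrA mulrAC.
have v2v : v / 2 <= v := ler_div_pow2 1 (ltW v0).
have v20 : 0 < v / 2 by rewrite divr_gt0.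
have /andP[lb _] := Fa_diff_bounds v20 v2v (le_trans vw wa).
have Kv : s0 / v <= Kinv beta v.
  rewrite -invf_div; apply: (Kinv_ge beta_cvg0 v0).
  by apply: Kstar_le_linear => //; rewrite (ltW v0) (le_trans vw wb).
have : s0 / v * (v - v / 2) <= Kinv beta v * (v - v / 2).
  by rewrite ler_wpM2r// subr_ge0.
have -> : s0 / v * (v - v / 2) = s0 / 2 by field; rewrite gt_eqF.
have -> : j.+1%:R * s0 / 2 = j%:R * s0 / 2 + s0 / 2 by rewrite -natr1; field.
lra.
Qed.

Lemma Fa_cvgy : Fa beta a x @[x --> 0^'+] --> +oo%E.
Proof.
have a20 : 0 < a / 2 by rewrite divr_gt0.
have a2a : a / 2 < a by rewrite ltr_pdivrMr// ltr_pMr// ltr1n.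
have Kfin_a2 : (Kstar beta (a / 2) < +oo)%E by apply: Kstar_fin; rewrite a20.
have [s0 [s00 bs0]] := Kstar_fin_beta_gt0 beta_ge0 a20 Kfin_a2.
set w := Num.min (beta s0) a.
have w0 : 0 < w by rewrite lt_min bs0 a_gt0.
have wb : w <= beta s0 by rewrite ge_min lexx.
have wa : w <= a by rewrite ge_min lexx orbT.
apply/cvgeyPge => M; rewrite near_withinE.
set k := Num.Def.archi_bound `|M * 2 / s0|.
have Mk : M <= k%:R * s0 / 2.
  have : M * 2 / s0 < k%:R by apply: le_lt_trans (ler_norm _) _; exact: archi_boundP.
  by rewrite ltr_pdivrMr// ler_pdivlMr// => /ltW.
have xk0 : 0 < w / 2 ^+ k by rewrite divr_gt0// exprn_gt0.
have xka : w / 2 ^+ k <= a := le_trans (ler_div_pow2 k (ltW w0)) wa.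
exists (w / 2 ^+ k) => //= y /=; rewrite sub0r normrN => yk y0.
have ya : y <= a := le_trans (ltW (le_lt_trans (ler_norm y) yk)) xka.
rewrite -(fineK (Fa_fin_num y0 ya)) lee_fin (le_trans Mk)//.
apply: le_trans (Fa_halving_ge k s00 w0 wb wa) (Fa_le y0 _ xka).
exact: ltW (le_lt_trans (ler_norm y) yk).
Qed.

Section decay.
Variable x : nat -> R.
Hypothesis x_ge0 : forall k, 0 <= x k.
Hypothesis x_noninc : forall k, x k.+1 <= x k.
Hypothesis x0_le : x 0 <= a.
Hypothesis Kstar_decr : forall k, (Kstar beta (x k) <= (x k - x k.+1)%:E)%E.

Lemma decay_le_a k : x k <= a.
Proof. by elim: k => // k IH; exact: le_trans (x_noninc k) IH. Qed.

Lemma Kinv_decay_gt0 k : 0 < x k -> 0 < Kinv beta (x k).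
Proof.
move=> xk0; apply: (Kinv_gt0 beta_cvg0 xk0).
exact: le_lt_trans (Kstar_decr k) (ltry _).
Qed.

Lemma Fa_decay_ge k : 0 < x k -> k%:R <= F (x k).
Proof.
elim: k => [|k IH] xk0; first exact: Fa_ge0.
have xk0' : 0 < x k := lt_le_trans xk0 (x_noninc k).
have /andP[lb _] := Fa_diff_bounds xk0 (x_noninc k) (decay_le_a k).
have Kk := Kstar_decr k.
have step0 : 0 < x k - x k.+1.
  by rewrite -lte_fin (lt_le_trans _ Kk)// Kstar_gt0.
have := ler_wpM2r (ltW step0) (Kinv_ge beta_cvg0 xk0' Kk).
rewrite mulVf ?gt_eqF// -natr1; have := IH xk0'; lra.
Qed.

Lemma decay_le n y : 0 < y -> y <= a -> Fa beta a y = n%:R%:E -> x n <= y.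
Proof.
move=> y0 ya Fy; have [xn0|xn0] := eqVneq (x n) 0; first by rewrite xn0 ltW.
have {xn0}xn0 : 0 < x n by rewrite lt_neqAle eq_sym xn0 x_ge0.
rewrite leNgt; apply/negP => yxn.
have /andP[lb _] := Fa_diff_bounds y0 (ltW yxn) (decay_le_a n).
rewrite Fy /= in lb; have := Fa_decay_ge xn0.
have : 0 < Kinv beta (x n) * (x n - y) by rewrite mulr_gt0 ?Kinv_decay_gt0 ?subr_gt0.
lra.
Qed.

End decay.
End Fa_properties.

Lemma fin_gt0_denom_of_ratio (R : realType) (N a : R) (Phi : \bar R) :
  0 <= N -> (0 <= Phi)%E -> (0 < N%:E / Phi <= a%:E)%E ->
  exists2 phi, Phi = phi%:E & 0 < phi.
Proof.
move=> N0; case: Phi => [r||]//; rewrite ?lee_fin => r0; last first.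
  by rewrite invey mule0 ltxx.
have [<-|r_neq0] := eqVneq 0 r; last by exists r => //; rewrite lt_neqAle r_neq0.
rewrite inve0; have [<-|N_neq0] := eqVneq 0 N; first by rewrite mul0e ltxx.
have N_gt0 : (0 < N%:E)%E by rewrite lte_fin lt_neqAle N_neq0.
by rewrite gt0_muley// leye_eq andbF.
Qed.

Section nash_decay.
Context d (T : measurableType d) (R : realType) (mu : probability T R)
  (P : R.-pker T ~> T) (Pstar : (T -> R) -> (T -> R))
  (Phi : (T -> R) -> \bar R) (a : R) (beta : R -> R).
Hypothesis Pinv : kinvariant mu P.
Hypothesis L2_Pstar : forall g, L2 mu g -> L2 mu (Pstar g).
Hypothesis Pstar_adjoint : forall f g, L2 mu f -> L2 mu g ->
  ip mu (kop P f) g = ip mu f (Pstar g).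
Hypothesis Phi_ge0 : forall f, L2 mu f -> (0 <= Phi f)%E.
Hypothesis a_sup : a%:E = ereal_sup [set ((norm2 mu f)%:E / Phi f)%E
  | f in [set f | L20 mu f /\ ~ {ae mu, forall x, f x = 0}]].
Hypothesis a_gt0 : 0 < a.
Hypothesis beta_ge0 : forall s, 0 < s -> 0 <= beta s.
Hypothesis Phi_iter_kop : forall f n, L2 mu f -> (0 < n)%N ->
  (Phi (iter n (kop P) f) <= Phi f)%E.
Hypothesis nash : forall f s, L20 mu f -> 0 < s ->
  ((norm2 mu f)%:E <= ((s * dirichlet mu (fun g => Pstar (kop P g)) f)%R)%:E
                       + (beta s)%:E * Phi f)%E.

Lemma Kstar_norm2_le f phi : L20 mu f -> 0 < phi -> (Phi f <= phi%:E)%E ->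
  (Kstar beta (norm2 mu f / phi) <=
    ((norm2 mu f - norm2 mu (kop P f)) / phi)%:E)%E.
Proof.
move=> hf phi0 Phi_le; have hL2 := hf.1.
rewrite -(dirichlet_kop Pinv L2_Pstar Pstar_adjoint hL2).
apply: Kstar_le_nash => //; first exact: dirichlet_kop_ge0.
move=> s s0; rewrite -lee_fin EFinD EFinM; apply: le_trans (nash hf s0) _.
by rewrite leeD2l// EFinM lee_wpmul2l// lee_fin beta_ge0.
Qed.

Lemma norm2_div_Phi_le f : L20 mu f -> ~ {ae mu, forall x, f x = 0} ->
  ((norm2 mu f)%:E / Phi f <= a%:E)%E.
Proof. by move=> hf nf; rewrite a_sup; apply: ereal_sup_ubound; exists f. Qed.

Lemma norm2_div_le f phi : L20 mu f -> Phi f = phi%:E -> 0 < phi ->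
  norm2 mu f / phi <= a.
Proof.
move=> hf Phif phi0; have [f0|nf] := pselect {ae mu, forall x, f x = 0}.
  suff -> : norm2 mu f = 0 by rewrite mul0r ltW.
  rewrite /norm2 (ae_eq_integral (cst 0%E)) ?integral0//.
    by apply/measurable_EFinP/measurable_funX; exact: hf.1.1.
  by apply: filterS f0 => x fx _; rewrite /= fx expr0n.
by have := norm2_div_Phi_le hf nf; rewrite Phif inver gt_eqF// -EFinM lee_fin.
Qed.

Lemma Kstar_fin_lt_a v : 0 < v < a -> (Kstar beta v < +oo)%E.
Proof.
move=> /andP[v0]; rewrite -lte_fin a_sup => /ereal_sup_gt [_ [f [hf nf] <-] vlt].
have [phi Phif phi0] : exists2 phi, Phi f = phi%:E & 0 < phi.
  apply: (fin_gt0_denom_of_ratio (a := a) (norm2_ge0 mu f) (Phi_ge0 hf.1)).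
  by rewrite (norm2_div_Phi_le hf nf) andbT (lt_trans _ vlt)// lte_fin.
rewrite Phif inver gt_eqF// -EFinM lte_fin in vlt.
apply: le_lt_trans (Kstar_le _ (ltW vlt)) _.
by apply: le_lt_trans (Kstar_norm2_le hf phi0 _) (ltry _); rewrite Phif.
Qed.

Lemma Kstar_norm2_iter_le f phi k : L20 mu f -> Phi f = phi%:E -> 0 < phi ->
  (Kstar beta (norm2 mu (iter k (kop P) f) / phi) <=
    (norm2 mu (iter k (kop P) f) / phi - norm2 mu (iter k.+1 (kop P) f) / phi)%:E)%E.
Proof.
move=> hf Phif phi0; rewrite -mulrBl.
apply: (Kstar_norm2_le (L20_iter_kop Pinv k hf) phi0).
by case: k => [|k]; rewrite -Phif//; exact: Phi_iter_kop hf.1 _.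
Qed.

End nash_decay.


Theorem theorem8 (d : measure_display) (T : measurableType d) (R : realType)
  (mu : probability T R) (P : R.-pker T ~> T)
  (Pstar : (T -> R) -> (T -> R))
  (Phi : (T -> R) -> \bar R) (a : R) (beta : R -> R) :
  kinvariant mu P ->
  (* P^* is the adjoint of P in L^2(mu) *)
  (forall g, L2 mu g -> L2 mu (Pstar g)) ->
  (forall f g, L2 mu f -> L2 mu g -> ip mu (kop P f) g = ip mu f (Pstar g)) ->
  (* Phi : L^2(mu) -> [0, +oo], well defined on a.e.-classes *)
  (forall f, L2 mu f -> (0 <= Phi f)%E) ->
  (forall f g, L2 mu f -> L2 mu g -> {ae mu, forall x, f x = g x} -> Phi f = Phi g) ->
  (forall f c, L2 mu f -> 0 < c -> Phi (fun x => c * f x) = ((c ^+ 2)%:E * Phi f)%E) ->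
  (forall f n, L2 mu f -> (0 < n)%N -> (Phi (iter n (kop P) f) <= Phi f)%E) ->
  (forall f, L2 mu f ->
     ((norm2 mu (fun x => (f x - mean mu f)%R))%:E
        <= a%:E * Phi (fun x => (f x - mean mu f)%R))%E) ->
  a%:E = ereal_sup [set ((norm2 mu f)%:E / Phi f)%E
                   | f in [set f | L20 mu f /\ ~ {ae mu, forall x, f x = 0}]] ->
  0 < a ->
  (forall s, 0 < s -> 0 <= beta s) ->
  (forall s t, 0 < s -> s <= t -> beta t <= beta s) ->
  beta x @[x --> +oo] --> 0 ->
  (forall f s, L20 mu f -> 0 < s ->
     ((norm2 mu f)%:E <= ((s * dirichlet mu (fun g => Pstar (kop P g)) f)%R)%:E
                          + (beta s)%:E * Phi f)%E) ->
  (* conclusions on F_a *)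
  (forall x, 0 < x <= a -> Fa beta a x \is a fin_num) /\
  {within `]0, a], continuous (fun x => fine (Fa beta a x))} /\
  (forall x y t, 0 < x <= a -> 0 < y <= a -> 0 <= t <= 1 ->
     fine (Fa beta a (t * x + (1 - t) * y))
       <= t * fine (Fa beta a x) + (1 - t) * fine (Fa beta a y)) /\
  (forall x y, 0 < x -> x < y -> y <= a ->
     fine (Fa beta a y) < fine (Fa beta a x)) /\
  (Fa beta a x @[x --> 0^'+] --> +oo%E) /\
  (* decay bound: ||P^n f||^2 <= Phi(f) F_a^{-1}(n) *)
  (forall f n y, L20 mu f -> (0 < Phi f < +oo)%E -> (0 < n)%N ->
     0 < y <= a -> Fa beta a y = n%:R%:E ->
     ((norm2 mu (iter n (kop P) f))%:E <= Phi f * y%:E)%E).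
Proof.
move=> Pinv L2_Pstar Pstar_adjoint Phi_ge0 _ _ Phi_iter_kop _ a_sup a_gt0
  beta_ge0 beta_noninc beta_cvg0 nash.
have Kstar_fin := Kstar_fin_lt_a Pinv L2_Pstar Pstar_adjoint Phi_ge0 a_sup beta_ge0 nash.
split; first by move=> x /andP[x0 xa]; exact: Fa_fin_num.
split; first exact: Fa_continuous.
split; first exact: Fa_convex.
split; first by move=> x y x0 xy ya; exact: Fa_lt.
split; first exact: Fa_cvgy.
move=> f n y hf /andP[Phi_gt0 Phi_lty] _ /andP[y0 ya] Fy.
set phi := fine (Phi f).
have Phif : Phi f = phi%:E by rewrite fineK// ge0_fin_numE// ltW.
have phi0 : 0 < phi by rewrite -lte_fin -Phif.
pose x k := norm2 mu (iter k (kop P) f) / phi.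
have x_ge0 k : 0 <= x k by rewrite divr_ge0 ?norm2_ge0 ?ltW.
have x_noninc k : x k.+1 <= x k.
  by rewrite ler_pM2r ?invr_gt0//; exact/norm2_kop_le/(L20_iter_kop Pinv k hf).1.
have x0_le : x 0 <= a by exact: (norm2_div_le a_sup a_gt0 hf Phif phi0).
have Kstar_decr k : (Kstar beta (x k) <= (x k - x k.+1)%:E)%E.
  exact: (Kstar_norm2_iter_le Pinv L2_Pstar Pstar_adjoint beta_ge0
                              Phi_iter_kop nash k hf Phif phi0).
have := decay_le beta_cvg0 x_ge0 x_noninc x0_le Kstar_decr y0 ya Fy.
by rewrite ler_pdivrMr// Phif -EFinM lee_fin mulrC.
Qed.
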